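(* For every (possibly partial) function $f:\mathcal{S}\to\mathcal{Z}$, $\mathcal{S}\subseteq\mathcal{X}\times\mathcal{Y}$, every $\varepsilon\ge0$ and every $z_0\in\mathcal{Z}$, $$\mathrm{srec}^{z_0}_\varepsilon(f)\le\overline{\mathrm{prt}}_\varepsilon(f)\le\mathrm{prt}_\varepsilon(f).$$
   Context: $\mathcal{X},\mathcal{Y},\mathcal{Z}$ finite; rectangles are $A\times B$ with $A\subseteq\mathcal{X},B\subseteq\mathcal{Y}$ (including empty); sums over $R$ range over all rectangles. Relaxed partition bound: for a distribution $\mu$ on $\mathcal{X}\times\mathcal{Y}$, $\overline{\mathrm{prt}}^\mu_\varepsilon(f)$ is the value of: minimize $1/\eta$ over $\eta>0$, $p_{R,z}\ge0$ s.t. (i) $\sum_{(x,y)\in\mathcal{S}}\mu(x,y)\sum_{R\ni(x,y)}p_{R,f(x,y)}+\sum_{(x,y)\notin\mathcal{S}}\mu(x,y)\sum_{z,R\ni(x,y)}p_{R,z}\ge(1-\varepsilon)\eta$; (ii) $\forall (x,y)\in\mathcal{X}\times\mathcal{Y}$: $\sum_{z,R\ni(x,y)}p_{R,z}\le\eta$; (iii) $\sum_{R,z}p_{R,z}=1$. $\overline{\mathrm{prt}}_\varepsilon(f)=\max_\mu\overline{\mathrm{prt}}^\mu_\varepsilon(f)$. Partition bound (Jain–Klauck): $\mathrm{prt}_\varepsilon(f)=\min\sum_{R,z}w_{R,z}$ over $w_{R,z}\ge0$ s.t. $\forall(x,y)\in\mathcal{S}$: $\sum_{R\ni(x,y)}w_{R,f(x,y)}\ge1-\varepsilon$,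 and $\forall(x,y)\in\mathcal{X}\times\mathcal{Y}$: $\sum_{z,R\ni(x,y)}w_{R,z}=1$. Smooth rectangle bound: $\mathrm{srec}^{z_0}_\varepsilon(f)=\min\sum_R w'_R$ over $w'_R\ge0$ s.t. $\forall(x,y)\in f^{-1}(z_0)$: $1-\varepsilon\le\sum_{R\ni(x,y)}w'_R\le1$, and $\forall(x,y)\in\mathcal{S}\setminus f^{-1}(z_0)$: $\sum_{R\ni(x,y)}w'_R\le\varepsilon$. *)

From HB Require Import structures.
From mathcomp Require Import all_boot all_order all_algebra.
Set Implicit Arguments. Unset Strict Implicit. Unset Printing Implicit Defensive.
Import Order.TTheory GRing.Theory Num.Theory.
Local Open Scope ring_scope.

Section Bounds.
Variables (R : realFieldType) (X Y Z : finType).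

Definition rect := ({set X} * {set Y})%type.
Definition in_rect (r : rect) (x : X) (y : Y) : bool := (x \in r.1) && (y \in r.2).

Definition is_min (P : R -> Prop) (v : R) : Prop := P v /\ forall w, P w -> v <= w.
Definition is_max (P : R -> Prop) (v : R) : Prop := P v /\ forall w, P w -> w <= v.

(* the (possibly partial) function f : S -> Z is given by S and a total f,
   only the values on S matter *)
Variables (S : {set X * Y}) (f : X -> Y -> Z).

Definition is_distribution (mu : X -> Y -> R) : Prop :=
  (forall x y, 0 <= mu x y) /\ \sum_(x : X) \sum_(y : Y) mu x y = 1.

Definition rprt_feasible (eps : R) (mu : X -> Y -> R) (eta : R) (p : rect -> Z -> R) : Prop :=
  [/\ 0 < eta,
      forall r z, 0 <= p r z,
      \sum_(xy in S) mu xy.1 xy.2 * (\sum_(r : rect | in_rect r xy.1 xy.2) p r (f xy.1 xy.2))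
        + \sum_(xy in ~: S) mu xy.1 xy.2 *
            (\sum_(z : Z) \sum_(r : rect | in_rect r xy.1 xy.2) p r z)
        >= (1 - eps) * eta,
      forall x y, \sum_(z : Z) \sum_(r : rect | in_rect r x y) p r z <= eta
    & \sum_(r : rect) \sum_(z : Z) p r z = 1].

Definition rprt_mu_objectives (eps : R) (mu : X -> Y -> R) (v : R) : Prop :=
  exists eta p, rprt_feasible eps mu eta p /\ v = eta^-1.

Definition is_rprt_mu (eps : R) (mu : X -> Y -> R) (v : R) : Prop :=
  is_min (rprt_mu_objectives eps mu) v.

Definition is_rprt (eps : R) (v : R) : Prop :=
  is_max (fun w => exists mu, is_distribution mu /\ is_rprt_mu eps mu w) v.

Definition prt_feasible (eps : R) (w : rect -> Z -> R) : Prop :=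
  [/\ forall r z, 0 <= w r z,
      forall x y, (x, y) \in S ->
        \sum_(r : rect | in_rect r x y) w r (f x y) >= 1 - eps
    & forall x y, \sum_(z : Z) \sum_(r : rect | in_rect r x y) w r z = 1].

Definition is_prt (eps : R) (v : R) : Prop :=
  is_min (fun t => exists w, prt_feasible eps w /\ t = \sum_(r : rect) \sum_(z : Z) w r z) v.

Definition srec_feasible (z0 : Z) (eps : R) (w : rect -> R) : Prop :=
  [/\ forall r, 0 <= w r,
      forall x y, (x, y) \in S -> f x y = z0 ->
        1 - eps <= \sum_(r : rect | in_rect r x y) w r <= 1
    & forall x y, (x, y) \in S -> f x y <> z0 ->
        \sum_(r : rect | in_rect r x y) w r <= eps].

Definition is_srec (z0 : Z) (eps : R) (v : R) : Prop :=
  is_min (fun t => exists w, srec_feasible z0 eps w /\ t = \sum_(r : rect) w r) v.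

End Bounds.

(* The right inequality is a rescaling: a partition-bound solution [w] of value
   [v], divided by [v], is feasible for the relaxed partition LP of every
   distribution [mu], with objective [v] (lemma [rprt_le_prt]).

   The left inequality is a minimax argument.  If every distribution [mu] has a
   relaxed solution of value at most [V0 = prtbar_eps(f)], then there is a
   single nonnegative weighting [u] of labelled rectangles with loads at most
   [1], correct weight at least [1 - eps] on every point of [S] and total
   weight at most [V0] (lemma [cover_solvable]); otherwise Farkas' lemma gives
   multipliers that define a distribution violating the hypothesis.  The
   [z0]-labelled part of [u] is then a smooth-rectangle solution
   ([srec_le_cover]).  To apply the hypothesis to an arbitrary [mu] we need
   that its relaxed LP attains its optimum ([rprt_mu_attained]). *)
From HB Require Import structures.
From mathcomp Require Import all_boot all_order all_algebra.
From mathcomp Require Import lra.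
Import Order.TTheory GRing.Theory Num.Theory.
Local Open Scope ring_scope.
Set Implicit Arguments. Unset Strict Implicit. Unset Printing Implicit Defensive.

Section Farkas.
Variable R : realFieldType.

Lemma sum_delta (I : finType) (i : I) (F : I -> R) :
  \sum_l (l == i)%:R * F l = F i.
Proof.
rewrite (bigD1 i) //= eqxx mul1r big1 ?addr0 // => l /negbTE ->.
by rewrite mul0r.
Qed.

Lemma sum_comb (I J : finType) (c : I -> R) (a : I -> J -> R) (x : J -> R) :
  \sum_l c l * \sum_j a l j * x j = \sum_j (\sum_l c l * a l j) * x j.
Proof.
under eq_bigr do rewrite mulr_sumr.
rewrite exchange_big /=; apply: eq_bigr => j _.
by rewrite mulr_suml; apply: eq_bigr => l _; rewrite mulrA.
Qed.

Lemma exists_between (I : finType) (P N : pred I) (G : I -> R) :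
  (forall i k, P i -> N k -> G k <= G i) ->
  exists t, (forall k, N k -> G k <= t) /\ (forall i, P i -> t <= G i).
Proof.
move=> sep; case: (pickP N) => [k0 Nk0|N0].
  case: (arg_maxP G Nk0) => k Nk kmax.
  by exists (G k); split=> [k' /kmax|i Pi]; last exact: sep.
case: (pickP P) => [i0 Pi0|P0].
  case: (arg_minP G Pi0) => i Pi imin.
  by exists (G i); split=> [k|i' /imin]; rewrite ?N0.
by exists 0; split=> [k|i]; rewrite ?N0 ?P0.
Qed.

(* Fourier's criterion in one variable: [A l * t <= d l] is solvable as soon
   as it holds for the rows with [A l = 0] and for the positive combinations
   of one row with [A > 0] and one row with [A < 0] that eliminate [t]. *)
Lemma one_var_solvable (I : finType) (A d : I -> R) :
  (forall l, A l = 0 -> 0 <= d l) ->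
  (forall i k, 0 < A i -> A k < 0 -> 0 <= d i * - A k + d k * A i) ->
  exists t, forall l, A l * t <= d l.
Proof.
move=> zero_rows pair_rows; pose G l := d l / A l.
have GA l : A l != 0 -> G l * A l = d l by move=> Al; rewrite divfK.
have sep i k : 0 < A i -> A k < 0 -> G k <= G i.
  move=> Ai Ak; have := pair_rows i k Ai Ak.
  have := GA i (lt0r_neq0 Ai); have := GA k (ltr0_neq0 Ak).
  have : 0 < A i * - A k by rewrite mulr_gt0 // oppr_gt0.
  by move: (G i) (G k) => gi gk; nra.
have [t [lower upper]] := exists_between sep.
exists t => l; case: (ltgtP (A l) 0) => Al.
- by have := lower l Al; have := GA l (ltr0_neq0 Al); move: (G l) => gl; nra.
- by have := upper l Al; have := GA l (lt0r_neq0 Al); move: (G l) => gl; nra.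
- by rewrite Al mul0r; apply: zero_rows.
Qed.

(* Multipliers of one Fourier-Motzkin elimination step for the column [A]:
   the rows where [A] vanishes, and the pairs of rows of opposite signs. *)
Definition fm_mult (I : finType) (A : I -> R) (m : I + I * I) (l : I) : R :=
  match m with
  | inl i => if A i == 0 then (l == i)%:R else 0
  | inr (i, k) => if (0 < A i) && (A k < 0)
                  then (l == i)%:R * - A k + (l == k)%:R * A i else 0
  end.

Lemma fm_mult_ge0 (I : finType) (A : I -> R) m l : 0 <= fm_mult A m l.
Proof.
case: m => [i|[i k]] /=; first by case: ifP.
case: ifP => // /andP[Ai Ak].
by rewrite addr_ge0 // mulr_ge0 // ?oppr_ge0 ltW.
Qed.

Lemma fm_mult_comb (I : finType) (A d : I -> R) m :
  \sum_l fm_mult A m l * d l =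
  match m with
  | inl i => if A i == 0 then d i else 0
  | inr (i, k) => if (0 < A i) && (A k < 0) then d i * - A k + d k * A i else 0
  end.
Proof.
case: m => [i|[i k]] /=.
  by case: ifP => _; rewrite ?sum_delta // big1 // => l _; rewrite mul0r.
case: ifP => _; last by rewrite big1 // => l _; rewrite mul0r.
under eq_bigr do rewrite mulrDl -!mulrA.
by rewrite big_split /= !sum_delta mulrC [A i * _]mulrC.
Qed.

Lemma fm_mult_kills (I : finType) (A : I -> R) m :
  \sum_l fm_mult A m l * A l = 0.
Proof.
rewrite fm_mult_comb; case: m => [i|[i k]].
  by case: ifP => // /eqP.
by case: ifP => // _; rewrite mulrN [A k * _]mulrC addNr.
Qed.

Lemma fm_mult_sound (I : finType) (A d : I -> R) :
  (forall m, 0 <= \sum_l fm_mult A m l * d l) ->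
  exists t, forall l, A l * t <= d l.
Proof.
move=> comb; apply: one_var_solvable => [l Al|i k Ai Ak].
  by have := comb (inl l); rewrite fm_mult_comb Al eqxx.
by have := comb (inr (i, k)); rewrite fm_mult_comb Ai Ak.
Qed.

Definition extend n (x : 'I_n -> R) (t : R) (k : 'I_n.+1) : R :=
  oapp x t (insub (val k)).

Lemma sum_extend n (F : 'I_n.+1 -> R) x t :
  \sum_k F k * extend x t k =
  \sum_(j < n) F (widen_ord (leqnSn n) j) * x j + F ord_max * t.
Proof.
rewrite big_ord_recr /=; congr (_ + _ * _).
  by apply: eq_bigr => j _; rewrite /extend /= valK.
by rewrite /extend insubN //= ltnn.
Qed.

(* Farkas' lemma, in the finitely generated form produced by Fourier-Motzkin
   elimination: for every matrix [a] there are finitely many nonnegative row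
   combinations [C j] annihilating [a] such that [a x <= b] is solvable
   whenever [C j . b >= 0] for all [j]. *)
Lemma farkas_ord n (I : finType) (a : I -> 'I_n -> R) :
  exists (J : finType) (C : J -> I -> R),
  [/\ forall j l, 0 <= C j l,
      forall j k, \sum_l C j l * a l k = 0 &
      forall b, (forall j, 0 <= \sum_l C j l * b l) ->
        exists x, forall l, \sum_k a l k * x k <= b l].
Proof.
elim: n I a => [|n IHn] I a.
  exists I, (fun j l => (l == j)%:R); split=> [j l|j [] //|b b_ok].
    by case: (l == j).
  by exists (fun _ => 0) => l; rewrite big_ord0; have := b_ok l; rewrite sum_delta.
pose A l := a l ord_max; pose c := fm_mult A.
pose a' m j := \sum_l c m l * a l (widen_ord (leqnSn n) j).
have [J [C' [C'_ge0 C'_kills C'_sound]]] := IHn _ a'.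
exists J, (fun j l => \sum_m C' j m * c m l); split.
- by move=> j l; apply: sumr_ge0 => m _; rewrite mulr_ge0 ?fm_mult_ge0.
- move=> j k; rewrite -sum_comb.
  case: (unliftP ord_max k) => [k'|] ->.
    have -> : lift ord_max k' = widen_ord (leqnSn n) k'.
      by apply: val_inj; rewrite /= /bump leqNgt ltn_ord.
    exact: C'_kills.
  by rewrite big1 // => m _; rewrite fm_mult_kills mulr0.
move=> b b_ok.
have [x' x'_ok] : exists x', forall m, \sum_j a' m j * x' j <= \sum_l c m l * b l.
  by apply: C'_sound => j; rewrite sum_comb.
pose s l := \sum_j a l (widen_ord (leqnSn n) j) * x' j.
have [t t_ok] : exists t, forall l, A l * t <= b l - s l.
  apply: fm_mult_sound => m; rewrite -/(c m).
  under eq_bigr do rewrite mulrBr.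
  by rewrite sumrB subr_ge0 /s sum_comb; apply: x'_ok.
exists (extend x' t) => l; rewrite sum_extend -/(s l) -/(A l).
by have := t_ok l; lra.
Qed.

Definition basis (V : finType) (v : V) : V -> R := fun w => (w == v)%:R.

Definition linear_form (V : finType) (L : (V -> R) -> R) : Prop :=
  forall x, L x = \sum_v L (basis v) * x v.

Lemma farkas (V I : finType) (L : I -> (V -> R) -> R) :
  (forall l, linear_form (L l)) ->
  exists (J : finType) (C : J -> I -> R),
  [/\ forall j l, 0 <= C j l,
      forall j x, \sum_l C j l * L l x = 0 &
      forall b, (forall j, 0 <= \sum_l C j l * b l) ->
        exists x, forall l, L l x <= b l].
Proof.
move=> L_lin; pose a l (k : 'I_#|V|) := L l (basis (enum_val k)).
have [J [C [C_ge0 C_kills C_sound]]] := farkas_ord a.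
exists J, C; split=> // [j x|b /C_sound[x' x'_ok]].
  under eq_bigr do rewrite L_lin.
  rewrite sum_comb big1 // => v _.
  by rewrite -[v]enum_rankK C_kills mul0r.
exists (fun v => x' (enum_rank v)) => l; rewrite L_lin.
rewrite (reindex (fun k : 'I_#|V| => enum_val k)) /=; last first.
  by exists enum_rank => [k|v] _; rewrite ?enum_valK ?enum_rankK.
by under eq_bigr do rewrite enum_valK; apply: x'_ok.
Qed.

Section LinearForms.
Variable V : finType.
Implicit Types L : (V -> R) -> R.

Lemma linear_form_eval v : linear_form (fun x : V -> R => x v).
Proof. by move=> x; under eq_bigr do rewrite /basis eq_sym; rewrite sum_delta. Qed.

Lemma linear_form_opp L : linear_form L -> linear_form (fun x => - L x).
Proof.
by move=> L_lin x; rewrite L_lin -sumrN; under [RHS]eq_bigr do rewrite mulNr.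
Qed.

Lemma linear_form_scale k L : linear_form L -> linear_form (fun x => k * L x).
Proof.
by move=> L_lin x; rewrite L_lin mulr_sumr; under eq_bigr do rewrite mulrA.
Qed.

Lemma linear_form_add L1 L2 :
  linear_form L1 -> linear_form L2 -> linear_form (fun x => L1 x + L2 x).
Proof.
move=> L1_lin L2_lin x; rewrite L1_lin L2_lin -big_split /=.
by under [RHS]eq_bigr do rewrite mulrDl.
Qed.

Lemma linear_form_sum (T : Type) (s : seq T) (P : pred T) (F : T -> (V -> R) -> R) :
  (forall t, linear_form (F t)) ->
  linear_form (fun x => \sum_(t <- s | P t) F t x).
Proof.
move=> F_lin x; under eq_bigr do rewrite F_lin.
by rewrite exchange_big /=; under [RHS]eq_bigr do rewrite mulr_suml.
Qed.
End LinearForms.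

Lemma max_one_var (J : finType) (al be : J -> R) (s0 B : R) :
  (forall j, 0 <= al j + s0 * be j) ->
  (forall s, (forall j, 0 <= al j + s * be j) -> s <= B) ->
  exists s, (forall j, 0 <= al j + s * be j) /\
            (forall s', (forall j, 0 <= al j + s' * be j) -> s' <= s).
Proof.
move=> s0_ok bounded.
have [j0 be_j0] : exists j, be j < 0.
  case: (pickP (fun j => be j < 0)) => [j|be_ge0]; first by exists j.
  suff : B + 1 <= B by lra.
  have s0_le := bounded s0 s0_ok.
  apply: bounded => j; have := s0_ok j.
  by have := be_ge0 j; rewrite /= ltNge => /negbFE; nra.
pose q j := al j / - be j.
have qE j : be j < 0 -> q j * - be j = al j.
  by move=> be_j; rewrite divfK // oppr_eq0 ltr0_neq0.
case: (@arg_minP _ _ _ j0 (fun j => be j < 0) q be_j0) => js be_js q_min.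
have js_ok j : 0 <= al j + q js * be j.
  have := qE js be_js; have := s0_ok js; have := s0_ok j.
  case: (ltP (be j) 0) => be_j; last by nra.
  by have := q_min j be_j; have := qE j be_j; nra.
exists (q js); split=> // s' s'_ok.
by have := s'_ok js; have := qE js be_js; nra.
Qed.

Lemma lp_max (V I : finType) (L : I -> (V -> R) -> R) (b g : I -> R) :
  (forall l, linear_form (L l)) ->
  (exists s x, forall l, L l x <= b l + s * g l) ->
  (exists B, forall s x, (forall l, L l x <= b l + s * g l) -> s <= B) ->
  exists s x, (forall l, L l x <= b l + s * g l) /\
    (forall s' x', (forall l, L l x' <= b l + s' * g l) -> s' <= s).
Proof.
move=> L_lin [s0 [x0 x0_ok]] [B bounded].
have [J [C [C_ge0 C_kills C_sound]]] := farkas L_lin.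
pose al j := \sum_l C j l * b l; pose be j := \sum_l C j l * g l.
have comb s j : al j + s * be j = \sum_l C j l * (b l + s * g l).
  rewrite /al /be mulr_sumr -big_split /=; apply: eq_bigr => l _.
  by rewrite mulrCA -mulrDr.
have necessary s x : (forall l, L l x <= b l + s * g l) ->
    forall j, 0 <= al j + s * be j.
  move=> x_ok j; rewrite comb -[X in X <= _](C_kills j x).
  by apply: ler_sum => l _; rewrite ler_wpM2l.
have sufficient s : (forall j, 0 <= al j + s * be j) ->
    exists x, forall l, L l x <= b l + s * g l.
  by move=> s_ok; apply: C_sound => j; rewrite -comb.
have bound s : (forall j, 0 <= al j + s * be j) -> s <= B.
  by move=> /sufficient[x x_ok]; apply: bounded x_ok.
have [s [s_ok s_max]] := max_one_var (necessary _ _ x0_ok) bound.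
have [x x_ok] := sufficient _ s_ok.
by exists s, x; split=> // s' x' /necessary; apply: s_max.
Qed.
End Farkas.

Section NonnegSums.
Variables (R : realFieldType) (T : finType) (F : T -> R).
Hypothesis F_ge0 : forall i, 0 <= F i.

Lemma sum_ge_term t : F t <= \sum_i F i.
Proof. by rewrite (bigD1 t) //= lerDl sumr_ge0. Qed.

Lemma sum_ge_two_terms t t' : t != t' -> F t + F t' <= \sum_i F i.
Proof.
move=> tt'; rewrite (bigD1 t) //= (bigD1 t') 1?eq_sym //= addrA lerDl.
exact: sumr_ge0.
Qed.

Lemma sum_ge_filter (P : pred T) : \sum_(i | P i) F i <= \sum_i F i.
Proof. by rewrite [X in _ <= X](bigID P) /= lerDl sumr_ge0. Qed.
End NonnegSums.

Section Bounds.
Variables (R : realFieldType) (X Y Z : finType) (S : {set X * Y}) (f : X -> Y -> Z).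
Variable eps : R.
Local Notation rect := (rect X Y).

Definition load (p : rect -> Z -> R) (x : X) (y : Y) : R :=
  \sum_z \sum_(r | in_rect r x y) p r z.

Definition correct (p : rect -> Z -> R) (x : X) (y : Y) : R :=
  \sum_(r | in_rect r x y) p r (f x y).

Definition total (p : rect -> Z -> R) : R := \sum_r \sum_z p r z.

Definition success (mu : X -> Y -> R) (p : rect -> Z -> R) : R :=
  \sum_(xy in S) mu xy.1 xy.2 * correct p xy.1 xy.2
  + \sum_(xy in ~: S) mu xy.1 xy.2 * load p xy.1 xy.2.

Lemma correct_le_load p x y :
  (forall r z, 0 <= p r z) -> correct p x y <= load p x y.
Proof.
move=> p_ge0; apply: (sum_ge_term (F := fun z => \sum_(r | in_rect r x y) p r z)).
by move=> z; apply: sumr_ge0.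
Qed.

Lemma load_le_total p x y : (forall r z, 0 <= p r z) -> load p x y <= total p.
Proof.
move=> p_ge0; rewrite /total [X in _ <= X]exchange_big /=.
by apply: ler_sum => z _; apply: sum_ge_filter.
Qed.

Lemma dist_average (mu : X -> Y -> R) c : is_distribution mu ->
  \sum_(xy in S) mu xy.1 xy.2 * c + \sum_(xy in ~: S) mu xy.1 xy.2 * c = c.
Proof.
case=> _ mu_sum; rewrite -!mulr_suml -mulrDl.
have <- : \sum_xy mu xy.1 xy.2 =
    \sum_(xy in S) mu xy.1 xy.2 + \sum_(xy in ~: S) mu xy.1 xy.2.
  rewrite (bigID (mem S)) /=; congr (_ + _).
  by apply: eq_bigl => xy; rewrite in_setC.
by rewrite -pair_bigA /= mu_sum mul1r.
Qed.

Lemma success_ge mu p c : is_distribution mu ->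
  (forall x y, (x, y) \in S -> c <= correct p x y) ->
  (forall x y, (x, y) \notin S -> c <= load p x y) -> c <= success mu p.
Proof.
move=> mu_dist on_S off_S; rewrite -(dist_average c mu_dist) /success.
have mu_ge0 xy : 0 <= mu xy.1 xy.2 by case: mu_dist.
apply: lerD; apply: ler_sum => -[x y]; rewrite ?inE => xy_S; rewrite ler_wpM2l //.
  exact: on_S.
exact: off_S.
Qed.

Lemma success_le mu p c : is_distribution mu ->
  (forall x y, (x, y) \in S -> correct p x y <= c) ->
  (forall x y, (x, y) \notin S -> load p x y <= c) -> success mu p <= c.
Proof.
move=> mu_dist on_S off_S; rewrite -(dist_average c mu_dist) /success.
have mu_ge0 xy : 0 <= mu xy.1 xy.2 by case: mu_dist.
apply: lerD; apply: ler_sum => -[x y]; rewrite ?inE => xy_S; rewrite ler_wpM2l //.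
  exact: on_S.
exact: off_S.
Qed.

(* The relaxed partition bound is a minimum only when [eps < 1]: otherwise
   doubling [eta] preserves feasibility and halves the objective. *)
Lemma rprt_mu_eps_lt1 mu v : is_rprt_mu S f eps mu v -> eps < 1.
Proof.
case=> -[eta [p [[eta_pos p_ge0 succ load_le total_p] ->]]] minimal.
rewrite ltNge; apply/negP => eps_ge1.
have feasible2 : rprt_feasible S f eps mu (2 * eta) p.
  split=> //; first by rewrite mulr_gt0.
    by move: succ; rewrite -/(success mu p); nra.
  by move=> x y; apply: le_trans (load_le x y) _; lra.
have := minimal _ (ex_intro _ _ (ex_intro _ _ (conj feasible2 erefl))).
rewrite invfM; have : 0 < eta^-1 by rewrite invr_gt0.
by move: (eta^-1) => a; lra.
Qed.

Lemma prt_to_rprt w mu : 0 <= eps -> prt_feasible S f eps w -> is_distribution mu ->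
  0 < total w /\ rprt_feasible S f eps mu (total w)^-1 (fun r z => w r z / total w).
Proof.
move=> eps_ge0 [w_ge0 w_correct w_load] mu_dist.
have mu_ge0 xy : 0 <= mu xy.1 xy.2 by case: mu_dist.
have w_pos : 0 < total w.
  suff : 1 <= total w by apply: lt_le_trans ltr01.
  rewrite -{1}(dist_average 1 mu_dist).
  rewrite -[X in _ <= X](dist_average (total w) mu_dist).
  by apply: lerD; apply: ler_sum => xy _;
    rewrite ler_wpM2l // -(w_load xy.1 xy.2) load_le_total.
set v := total w; set q := (fun r z => w r z / v).
have load_q x y : load q x y = v^-1.
  rewrite /load; under eq_bigr do rewrite -mulr_suml.
  by rewrite -mulr_suml -/(load w x y) [load w x y]w_load mul1r.
have correct_q x y : correct q x y = correct w x y / v.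
  by rewrite /correct -mulr_suml.
have v_inv_pos : 0 < v^-1 by rewrite invr_gt0.
split=> //; split=> //.
- by move=> r z; rewrite divr_ge0 // ltW.
- apply: success_ge => // x y; last first.
    by rewrite load_q; move: (v^-1) v_inv_pos => a; nra.
  by move=> xy_S; rewrite correct_q ler_wpM2r ?w_correct // ltW.
- by move=> x y; rewrite -/(load q x y) load_q.
- under eq_bigr do rewrite -mulr_suml.
  by rewrite -mulr_suml mulfV // gt_eqF.
Qed.

Lemma rprt_le_prt mu v w : 0 <= eps -> is_distribution mu ->
  is_rprt_mu S f eps mu v -> prt_feasible S f eps w -> v <= total w.
Proof.
move=> eps_ge0 mu_dist [_ minimal] w_feas.
have [w_pos w_rprt] := prt_to_rprt eps_ge0 w_feas mu_dist.
rewrite -[total w]invrK; apply: minimal.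
by exists (total w)^-1, (fun r z => w r z / total w).
Qed.

Local Notation cell := (rect * Z)%type.

Definition curry (u : cell -> R) : rect -> Z -> R := fun r z => u (r, z).

Ltac linear_form_auto :=
  repeat match goal with |- linear_form _ => first
    [ apply: linear_form_sum => ? | apply: linear_form_add
    | apply: linear_form_opp | apply: linear_form_scale
    | apply: linear_form_eval ] end.

Section RelaxedLP.
Variable mu : X -> Y -> R.

(* The relaxed partition LP of [mu] as a system [rprt_row u <= rprt_rhs +
   eta * rprt_slope] in the unknowns [u]: nonnegativity, loads at most [eta],
   success at least [(1 - eps) eta], and total weight [1] (two rows). *)
Definition rprt_row (i : (cell + (X * Y)) + option bool) (u : cell -> R) : R :=
  match i with
  | inl (inl v) => - u v
  | inl (inr xy) => load (curry u) xy.1 xy.2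
  | inr None => - success mu (curry u)
  | inr (Some b) => if b then total (curry u) else - total (curry u)
  end.

Definition rprt_rhs (i : (cell + (X * Y)) + option bool) : R :=
  if i is inr (Some b) then (if b then 1 else -1) else 0.

Definition rprt_slope (i : (cell + (X * Y)) + option bool) : R :=
  match i with inl (inr _) => 1 | inr None => - (1 - eps) | _ => 0 end.

Lemma rprt_row_linear i : linear_form (rprt_row i).
Proof.
by case: i => [[v|xy]|[[]|]]; rewrite /= /load /success /correct /total /curry;
  linear_form_auto.
Qed.

Lemma rprt_feasible_rows eta u : 0 < eta ->
  rprt_feasible S f eps mu eta (curry u) <->
  forall i, rprt_row i u <= rprt_rhs i + eta * rprt_slope i.
Proof.
move=> eta_pos; split.
  case=> _ u_ge0 succ load_le total1 [[[r z]|[x y]]|[[]|]];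
    rewrite /= ?mulr0 ?mulr1 ?add0r ?addr0.
  - by rewrite oppr_le0; apply: u_ge0.
  - exact: load_le.
  - by rewrite /total total1.
  - by rewrite /total total1.
  - by rewrite mulrN lerN2 mulrC.
move=> rows; split=> // [r z|||].
- by have := rows (inl (inl (r, z))); rewrite /= mulr0 addr0 oppr_le0.
- by have := rows (inr None); rewrite /= add0r mulrN lerN2 mulrC.
- by move=> x y; have := rows (inl (inr (x, y))); rewrite /= add0r mulr1.
- have := rows (inr (Some true)); have := rows (inr (Some false)).
  by rewrite /= !mulr0 !addr0 -/(total (curry u)); lra.
Qed.

(* For a distribution and [eps < 1] the rows force [eta <= 1 / (1 - eps)],
   since [(1 - eps) eta <= success <= total = 1]. *)
Lemma rprt_rows_bounded s u : is_distribution mu -> eps < 1 ->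
  (forall i, rprt_row i u <= rprt_rhs i + s * rprt_slope i) -> s <= (1 - eps)^-1.
Proof.
move=> mu_dist eps_lt1 rows.
have u_ge0 r z : 0 <= curry u r z.
  by have := rows (inl (inl (r, z))); rewrite /= mulr0 addr0 oppr_le0.
have succ_le : success mu (curry u) <= total (curry u).
  apply: success_le => // x y _; last exact: load_le_total.
  by apply: le_trans (correct_le_load _ _ _) (load_le_total _ _ _).
have := rows (inr None); have := rows (inr (Some true)).
rewrite /= mulr0 addr0 add0r -[_^-1]mulr1 ler_pdivlMl ?subr_gt0 // => tot.
by move: succ_le tot; lra.
Qed.

Lemma rprt_mu_attained eta0 p0 : eps < 1 -> is_distribution mu ->
  rprt_feasible S f eps mu eta0 p0 -> exists v, is_rprt_mu S f eps mu v.
Proof.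
move=> eps_lt1 mu_dist p0_feas.
have eta0_pos : 0 < eta0 by case: p0_feas.
have rows_of eta p : rprt_feasible S f eps mu eta p ->
    forall i, rprt_row i (fun v => p v.1 v.2) <= rprt_rhs i + eta * rprt_slope i.
  by move=> p_feas; apply/rprt_feasible_rows => //; case: p_feas.
have bounded : exists B, forall s u,
    (forall i, rprt_row i u <= rprt_rhs i + s * rprt_slope i) -> s <= B.
  by exists (1 - eps)^-1 => s u; apply: rprt_rows_bounded.
have [s [u [u_rows s_max]]] :=
  lp_max rprt_row_linear (ex_intro _ _ (ex_intro _ _ (rows_of _ _ p0_feas))) bounded.
have s_pos : 0 < s by apply: lt_le_trans eta0_pos (s_max _ _ (rows_of _ _ p0_feas)).
exists s^-1; split.
  by exists s, (curry u); split=> //; apply/rprt_feasible_rows.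
move=> _ [eta [p [p_feas ->]]].
have eta_pos : 0 < eta by case: p_feas.
by rewrite lef_pV2 ?posrE // (s_max _ _ (rows_of _ _ p_feas)).
Qed.
End RelaxedLP.

Section CoverLP.
Variable V0 : R.
Local Notation cover_index := ((cell + (X * Y)) + ((X * Y) + unit))%type.

(* The uniform system behind the minimax step: a nonnegative weighting of
   labelled rectangles with loads at most [1], correct weight at least
   [1 - eps] on every point of [S], and total weight at most [V0]. *)
Definition cover_row (i : cover_index) (u : cell -> R) : R :=
  match i with
  | inl (inl v) => - u v
  | inl (inr xy) => load (curry u) xy.1 xy.2
  | inr (inl xy) => - ((xy \in S)%:R * correct (curry u) xy.1 xy.2)
  | inr (inr _) => total (curry u)
  end.

Definition cover_rhs (i : cover_index) : R :=
  match i with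
  | inl (inl _) => 0
  | inl (inr _) => 1
  | inr (inl xy) => - ((xy \in S)%:R * (1 - eps))
  | inr (inr _) => V0
  end.

Lemma cover_row_linear i : linear_form (cover_row i).
Proof.
by case: i => [[v|xy]|[xy|[]]]; rewrite /= /load /correct /total /curry;
  linear_form_auto.
Qed.

(* Multipliers [c] on the correctness rows, normalised, form a distribution. *)
Definition corr_weight (c : cover_index -> R) : R :=
  \sum_xy c (inr (inl xy)) * (xy \in S)%:R.

Definition cover_dist (c : cover_index -> R) (x : X) (y : Y) : R :=
  c (inr (inl (x, y))) * ((x, y) \in S)%:R / corr_weight c.

Lemma cover_dist_distribution c : (forall l, 0 <= c l) -> 0 < corr_weight c ->
  is_distribution (cover_dist c).
Proof.
move=> c_ge0 D_pos; split=> [x y|]; first by rewrite divr_ge0 ?mulr_ge0 // ltW.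
rewrite pair_bigA /= -mulr_suml /cover_dist /corr_weight.
under eq_bigr do rewrite -surjective_pairing.
by rewrite mulfV // gt_eqF.
Qed.

Lemma cover_dist_success c p : 0 < corr_weight c ->
  success (cover_dist c) p * corr_weight c =
  \sum_xy c (inr (inl xy)) * ((xy \in S)%:R * correct p xy.1 xy.2).
Proof.
move=> D_pos; rewrite /success [X in _ + X]big1 ?addr0; last first.
  by move=> xy; rewrite inE /cover_dist -surjective_pairing => /negbTE ->;
    rewrite mulr0 !mul0r.
rewrite mulr_suml big_mkcond /=; apply: eq_bigr => xy _.
rewrite /cover_dist -surjective_pairing mulrAC divfK ?gt_eqF //.
by case: (xy \in S); rewrite ?mul0r ?mulr0 // mulrA.
Qed.

Lemma cover_rhs_comb c : \sum_l c l * cover_rhs l =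
  \sum_xy c (inl (inr xy)) - (1 - eps) * corr_weight c + c (inr (inr tt)) * V0.
Proof.
rewrite !big_sumType /= (big_pred1 tt) => [|[]] //.
rewrite big1 ?add0r => [|v _]; last by rewrite mulr0.
under eq_bigr do rewrite mulr1.
rewrite addrA; congr (_ + _ + _).
rewrite /corr_weight mulr_sumr -sumrN; apply: eq_bigr => xy _.
by rewrite mulrN mulrA mulrC.
Qed.

(* Weak duality: a relaxed solution for the distribution read off from the
   multipliers [c] satisfies the [c]-combination of the system, scaled by [eta]. *)
Lemma cover_rows_weighted c eta u : (forall l, 0 <= c l) -> 0 < corr_weight c ->
  rprt_feasible S f eps (cover_dist c) eta (curry u) -> eta^-1 <= V0 ->
  \sum_l c l * cover_row l u <= eta * \sum_l c l * cover_rhs l.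
Proof.
move=> c_ge0 D_pos [eta_pos u_ge0 succ load_le total1] eta_small.
rewrite cover_rhs_comb !big_sumType (big_pred1 tt) => [|[]] //=.
have nonneg : \sum_v c (inl (inl v)) * - u v <= 0.
  by apply: sumr_le0 => -[r z] _; rewrite mulrN oppr_le0 mulr_ge0 ?(u_ge0 r z).
have loads : \sum_xy c (inl (inr xy)) * load (curry u) xy.1 xy.2 <=
             eta * \sum_xy c (inl (inr xy)).
  rewrite mulr_sumr; apply: ler_sum => xy _; rewrite mulrC.
  by apply: ler_wpM2r; [exact: c_ge0 | exact: load_le].
have corrects : \sum_xy c (inr (inl xy)) *
    - ((xy \in S)%:R * correct (curry u) xy.1 xy.2) <=
    - ((1 - eps) * eta * corr_weight c).
  under eq_bigr do rewrite mulrN.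
  rewrite sumrN lerN2 -cover_dist_success //.
  by apply: ler_wpM2r; [exact: ltW | exact: succ].
have tot : c (inr (inr tt)) * total (curry u) <= c (inr (inr tt)) * (eta * V0).
  rewrite /total total1; apply: ler_wpM2l => //.
  rewrite -(mulfV (lt0r_neq0 eta_pos)).
  by apply: ler_wpM2l; [exact: ltW | exact: eta_small].
lra.
Qed.

(* The minimax step: if every distribution has a relaxed solution of value at
   most [V0 > 0], then the uniform system is solvable (Farkas' lemma; a
   certificate of unsolvability would yield a violating distribution). *)
Lemma cover_solvable : 0 < V0 ->
  (forall mu, is_distribution mu ->
     exists eta p, rprt_feasible S f eps mu eta p /\ eta^-1 <= V0) ->
  exists u, forall i, cover_row i u <= cover_rhs i.
Proof.
move=> V0_pos rprt_small.
have [J [C [C_ge0 C_kills C_sound]]] := farkas cover_row_linear.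
apply: C_sound => j; rewrite leNgt; apply/negP => comb_neg.
have D_pos : 0 < corr_weight (C j).
  rewrite lt_def sumr_ge0 => [|xy _]; last by rewrite mulr_ge0.
  rewrite andbT; apply/negP => /eqP D0; move: comb_neg.
  rewrite cover_rhs_comb D0 mulr0 subr0.
  have : 0 <= \sum_xy C j (inl (inr xy)) by apply: sumr_ge0.
  have : 0 <= C j (inr (inr tt)) * V0 by rewrite mulr_ge0 // ltW.
  lra.
have [eta [p [p_feas eta_small]]] :=
  rprt_small _ (cover_dist_distribution (C_ge0 j) D_pos).
have eta_pos : 0 < eta by case: p_feas.
have := @cover_rows_weighted _ _ (fun v => p v.1 v.2) (C_ge0 j) D_pos p_feas
  eta_small.
by rewrite C_kills; nra.
Qed.

Lemma srec_le_cover z0 u vsrec : (forall i, cover_row i u <= cover_rhs i) ->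
  is_srec S f z0 eps vsrec -> vsrec <= V0.
Proof.
move=> rows [_ srec_min].
have u_ge0 v : 0 <= u v by have := rows (inl (inl v)); rewrite /= oppr_le0.
have load_le1 x y : load (curry u) x y <= 1 := rows (inl (inr (x, y))).
have correct_ge x y : (x, y) \in S -> 1 - eps <= correct (curry u) x y.
  by move=> xy_S; have := rows (inr (inl (x, y))); rewrite /= xy_S !mul1r lerN2.
have labels_ge0 x y z : 0 <= \sum_(r | in_rect r x y) u (r, z).
  exact: sumr_ge0.
apply: le_trans (srec_min (\sum_r u (r, z0)) _) _.
  exists (fun r => u (r, z0)); split=> //; split=> // x y xy_S fxy.
    apply/andP; split; first by rewrite -fxy; apply: correct_ge.
    by apply: le_trans (load_le1 x y); apply: (sum_ge_term (labels_ge0 x y)).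
  have z0_fxy : z0 != f x y by apply/eqP => z0E; apply: fxy; rewrite z0E.
  have := sum_ge_two_terms (labels_ge0 x y) z0_fxy.
  have := load_le1 x y; have := correct_ge x y xy_S.
  by rewrite /load /correct /curry /=; lra.
apply: le_trans (rows (inr (inr tt))); apply: ler_sum => r _.
exact: (sum_ge_term (fun z => u_ge0 (r, z))).
Qed.
End CoverLP.
End Bounds.

Unset Implicit Arguments.
Theorem lemma3p2 (R : realFieldType) (X Y Z : finType) (S : {set X * Y})
  (f : X -> Y -> Z) (eps : R) (z0 : Z) (heps : 0 <= eps)
  (vsrec vrprt vprt : R) :
  is_srec S f z0 eps vsrec -> is_rprt S f eps vrprt -> is_prt S f eps vprt ->
  vsrec <= vrprt /\ vrprt <= vprt.
Proof.
move=> srec_v [[mu1 [mu1_dist rprt_mu1]] rprt_max] [[w [w_feas ->]] _].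
have eps_lt1 := rprt_mu_eps_lt1 rprt_mu1.
have vrprt_pos : 0 < vrprt.
  by case: rprt_mu1 => -[eta [p [[eta_pos _ _ _ _] ->]]] _; rewrite invr_gt0.
have every_mu mu : is_distribution mu ->
    exists eta p, rprt_feasible S f eps mu eta p /\ eta^-1 <= vrprt.
  move=> mu_dist; have [_ w_rprt] := prt_to_rprt heps w_feas mu_dist.
  have [v rprt_mu] := rprt_mu_attained eps_lt1 mu_dist w_rprt.
  case: (rprt_mu) => -[eta [p [p_feas v_eta]]] _.
  by exists eta, p; split=> //; rewrite -v_eta; apply: rprt_max; exists mu.
split; last exact: rprt_le_prt heps mu1_dist rprt_mu1 w_feas.
have [u u_ok] := cover_solvable vrprt_pos every_mu.
exact: srec_le_cover u_ok srec_v.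
Qed.
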